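(* Fix a live-path graph $G_X$ (with positive subgraph $G^+$ and negative subgraph $G^-$ on vertex set $V$) and a negative seed set $N_0\subseteq V$. For $S\subseteq V\setminus N_0$ let $IBS(S)=\{v\in V: d_{G^-}(N_0,v)<\infty \text{ and } d_{G^+}(S,v)<d_{G^-}(N_0,v)\}$ (the set of nodes that are -active when the positive seed set is empty but not -active when it is $S$). Then the set function $S\mapsto |IBS(S)|$ on subsets of $V\setminus N_0$ is monotone and submodular: for all $S\subseteq T\subseteq V\setminus N_0$ and $x\in V\setminus(T\cup N_0)$, $|IBS(S)|\le|IBS(T)|$ and $|IBS(S\cup\{x\})|-|IBS(S)|\ge|IBS(T\cup\{x\})|-|IBS(T)|$.
   Context: A live-path graph $G_X$ on vertex set $V$ consists of two edge sets: $G^+$, in which every node has at most one (positive) in-edge, and $G^-$, in which every node has at most one (negative) in-edge. For $A\subseteq V$, $d_{G^+}(A,v)$ denotes the length of a shortest directed path in $G^+$ from some node of $A$ to $v$ ($0$ if $v\in A$, $\infty$ if no such path exists, and $\infty$ if $A=\emptyset$), and $d_{G^-}(A,v)$ is defined analogously in $G^-$. In $G_X$ with seeds $(P_0,N_0)$, a node $v$ is -active iff $d_{G^-}(N_0,v)<\infty$ and $d_{G^-}(N_0,v)\le d_{G^+}(P_0,v)$. *)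

From HB Require Import structures.
From mathcomp Require Import all_boot all_order all_algebra.
Set Implicit Arguments. Unset Strict Implicit. Unset Printing Implicit Defensive.

Definition in_deg_le1 (V : finType) (e : rel V) : Prop :=
  forall u w v : V, e u v -> e w v -> u = w.

Definition live_path_graph (V : finType) (ep en : rel V) : Prop :=
  in_deg_le1 ep /\ in_deg_le1 en.

Fixpoint layer (V : finType) (e : rel V) (A : {set V}) (k : nat) : {set V} :=
  if k is k'.+1 then [set v | [exists u in layer e A k', e u v]] else A.

(* Shortest directed path length from A to v; None encodes infinity.
   A shortest walk is a simple path, hence has length < #|V|, so searching
   k in [0, #|V|) is exhaustive.  dist e set0 v = None. *)
Definition dist (V : finType) (e : rel V) (A : {set V}) (v : V) : option nat :=
  let k := find (fun k => v \in layer e A k) (iota 0 #|V|) in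
  if k < #|V| then Some k else None.

Definition ltd (a b : option nat) : bool :=
  match a, b with
  | Some x, Some y => x < y
  | Some _, None => true
  | None, _ => false
  end.

Definition IBS (V : finType) (ep en : rel V) (N0 S : {set V}) : {set V} :=
  [set v | (dist en N0 v != None) && ltd (dist ep S v) (dist en N0 v)].

(* IBS is a coverage function, hence monotone and submodular.

   Layers distribute over unions of start sets (layerU), so the condition
   "d_{G+}(S,v) < d_{G-}(N0,v)" for S = A u B is the disjunction of the
   conditions for A and for B; that is, IBS(A u B) = IBS(A) u IBS(B) (IBSU).
   Any union-preserving map F from sets to sets is monotone, and the
   cardinality of its values is submodular, by inclusion-exclusion applied to
   F(S u {x}) = F(S) u F({x}) (section Coverage). *)
From HB Require Import structures.
From mathcomp Require Import all_boot all_order all_algebra.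
From mathcomp Require Import zify.
Import GRing.Theory Num.Theory.
Set Implicit Arguments. Unset Strict Implicit. Unset Printing Implicit Defensive.

Section Coverage.
Variables (V W : finType) (F : {set V} -> {set W}).
Hypothesis FU : forall A B, F (A :|: B) = F A :|: F B.

Lemma cover_mono (A B : {set V}) : A \subset B -> F A \subset F B.
Proof. by move=> /setUidPr <-; rewrite FU subsetUl. Qed.

Lemma cover_submod (A B : {set V}) (x : V) : A \subset B ->
  (#|F (x |: B)| + #|F A| <= #|F (x |: A)| + #|F B|)%N.
Proof.
move=> sAB; rewrite !FU.
have := cardsUI (F [set x]) (F A); have := cardsUI (F [set x]) (F B).
have : (#|F [set x] :&: F A| <= #|F [set x] :&: F B|)%N.
  by apply/subset_leq_card/setIS/cover_mono.
lia.
Qed.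
End Coverage.

Lemma layerU (V : finType) (e : rel V) (A B : {set V}) (k : nat) :
  layer e (A :|: B) k = layer e A k :|: layer e B k.
Proof.
elim: k => [//|k IH] /=; apply/setP => v; rewrite !inE IH.
apply/existsP/orP.
- by case=> u /andP[]; rewrite inE => /orP[] hu he; [left|right];
     apply/existsP; exists u; rewrite hu.
- by case=> /existsP[u /andP[hu he]]; exists u; rewrite inE hu ?orbT.
Qed.

Lemma ltd_dist_layer (V : finType) (e : rel V) (A : {set V}) (v : V) (n : nat) :
  ltd (dist e A v) (Some n) =
  [exists k : 'I_#|V|, (k < n) && (v \in layer e A k)].
Proof.
rewrite /dist; set p := fun k => v \in layer e A k.
case: ifP => hk /=.
- apply/idP/existsP.
  + move=> hn; exists (Ordinal hk); rewrite /= hn /=.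
    have := nth_find 0 (a := p) (s := iota 0 #|V|).
    by rewrite has_find size_iota hk nth_iota // add0n; apply.
  + case=> j /andP[hjn hj]; apply: leq_ltn_trans hjn; rewrite leqNgt.
    apply/negP => /(before_find 0); rewrite nth_iota ?add0n //.
    by rewrite /p hj.
- apply/esym/negbTE/existsP => -[j /andP[_ hj]].
  have : has p (iota 0 #|V|).
    by apply/hasP; exists (nat_of_ord j); rewrite // mem_iota /= add0n.
  by rewrite has_find size_iota hk.
Qed.

Lemma IBSU (V : finType) (ep en : rel V) (N0 A B : {set V}) :
  IBS ep en N0 (A :|: B) = IBS ep en N0 A :|: IBS ep en N0 B.
Proof.
apply/setP => v; rewrite !inE; case: (dist en N0 v) => [n|] //=.
rewrite !ltd_dist_layer; apply/existsP/orP.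
- by case=> k /andP[hk]; rewrite layerU inE => /orP[] h; [left|right];
     apply/existsP; exists k; rewrite hk h.
- by case=> /existsP[k /andP[hk h]]; exists k; rewrite hk layerU inE h ?orbT.
Qed.

Theorem lemma5 (V : finType) (ep en : rel V) (N0 : {set V})
  (hG : live_path_graph ep en)
  (S T : {set V}) (x : V)
  (hS : S \subset ~: N0) (hT : T \subset ~: N0) (hST : S \subset T)
  (hx : x \notin T :|: N0) :
  (#|IBS ep en N0 S| <= #|IBS ep en N0 T|)%N /\
  ((#|IBS ep en N0 (x |: S)|%:Z - #|IBS ep en N0 S|%:Z)
     >= (#|IBS ep en N0 (x |: T)|%:Z - #|IBS ep en N0 T|%:Z))%R.
Proof.
have FU := IBSU ep en N0.
split; first exact: subset_leq_card (cover_mono FU hST).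
have := cover_submod FU x hST; lia.
Qed.
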